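(* Let $\lambda=\langle1^{m_1},2^{m_2},\dots,k^{m_k}\rangle$ with all $m_i>0$, $n\ge1$, $x_1,\dots,x_n>0$, $t>0$. For $1\le j\le k$ let $M_j=m_j+\dots+m_k$ and $M_{k+1}=0$. Under the stationary distribution of the mTAZRP of type $\lambda$ on $n$ sites, the expected number of particles of species $j$ at site $1$ is $$\langle\tau^{(j)}_1\rangle=x_1\frac{\partial}{\partial x_1}\log\left(\frac{\widetilde H_{\langle1^{M_j}\rangle}(x_1,\dots,x_n;1,t)}{\widetilde H_{\langle1^{M_{j+1}}\rangle}(x_1,\dots,x_n;1,t)}\right),$$ with $\widetilde H_{\langle1^0\rangle}:=1$.
   Context: mTAZRP: for a partition $\lambda$ and $n\ge1$, sites $1,\dots,n$ on a ring (site $n+1$ is site $1$); a configuration assigns to each site a multiset of species with union the multiset of parts of $\lambda$; if site $j$ has $c$ particles of species $r$ and $d$ of species larger than $r$, a particle of species $r$ jumps from $j$ to $j+1$ at rate $x_j^{-1}t^d(1+t+\dots+t^{c-1})$. $\langle1^{m_1},\dots,k^{m_k}\rangle$ denotes the partition with part $i$ occurring $m_i$ times. Notation: $[a]_t=1+t+\dots+t^{a-1}$, $[a]_t!=\prod_{b\le a}[b]_t$, $\begin{bmatrix}m\\ \eta_1,\dots,\eta_n\end{bmatrix}_t=[m]_t!/\prod_i[\eta_i]_t!$, and $\widetilde H_{\langle1^m\rangle}(x_1,\dots,x_n;1,t)=\sum_{\eta_1+\dots+\eta_n=m,\ \eta_i\ge0}\begin{bmatrix}m\\ \eta_1,\dots,\eta_n\end{bmatrix}_t\prod_i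 x_i^{\eta_i}$. *)

From HB Require Import structures.
From mathcomp Require Import all_boot all_order all_algebra.
From mathcomp Require Import all_classical all_reals all_analysis.
Set Implicit Arguments. Unset Strict Implicit. Unset Printing Implicit Defensive.
Import Order.TTheory GRing.Theory Num.Theory.
Local Open Scope ring_scope.

Section MTAZRP.
Variable R : realType.

Definition qint (t : R) (a : nat) : R := \sum_(b < a) t ^+ b.
Definition qfact (t : R) (a : nat) : R := \prod_(b < a) qint t b.+1.

(* \tilde H_{<1^m>}(x_1..x_n; 1, t) = sum over compositions eta of m into n
   nonnegative parts of the t-multinomial times prod x_i^eta_i.
   (For m = 0 this sum is 1.) *)
Definition Htilde (n m : nat) (x : 'I_n -> R) (t : R) : R :=
  \sum_(eta : {ffun 'I_n -> 'I_m.+1} | (\sum_(i < n) (eta i : nat) == m)%N)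
     (qfact t m / \prod_(i < n) qfact t (eta i)) * \prod_(i < n) x i ^+ eta i.

(* Configurations of the mTAZRP of type <1^{m_1},...,k^{m_k}> on n sites:
   eta r i = number of particles of species r+1 at site i+1 (r : 'I_k,
   i : 'I_n); bounded by N = total number of particles. *)
Definition tot (k : nat) (m : 'I_k -> nat) : nat := (\sum_(r < k) m r)%N.

Definition config (k n : nat) (m : 'I_k -> nat) :=
  {ffun 'I_k -> {ffun 'I_n -> 'I_(tot m).+1}}.

Definition valid (k n : nat) (m : 'I_k -> nat) (eta : config n m) : bool :=
  [forall r : 'I_k, (\sum_(i < n) (eta r i : nat) == m r)%N].

Definition moved (k n : nat) (m : 'I_k -> nat) (eta : config n m)
    (r : 'I_k) (j : 'I_n) (eta' : config n m) : bool :=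
  (0 < eta r j)%N &&
  [forall r' : 'I_k, forall i : 'I_n,
     (eta' r' i : nat) ==
     ((eta r' i - ((r' == r) && (i == j))) + ((r' == r) && (i == ordS j)))%N].

Definition jump_rate (k n : nat) (m : 'I_k -> nat) (x : 'I_n -> R) (t : R)
    (eta : config n m) (r : 'I_k) (j : 'I_n) : R :=
  (x j)^-1 * t ^+ (\sum_(r' < k | (r < r')%N) (eta r' j : nat))%N
           * qint t (eta r j).

Definition Q (k n : nat) (m : 'I_k -> nat) (x : 'I_n -> R) (t : R)
    (eta eta' : config n m) : R :=
  \sum_(r < k) \sum_(j < n)
     (if moved eta r j eta' then jump_rate x t eta r j else 0).

Definition stationary (k n : nat) (m : 'I_k -> nat) (x : 'I_n -> R) (t : R)
    (pi : config n m -> R) : Prop :=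
  (forall eta, ~~ valid eta -> pi eta = 0) /\
  (forall eta, 0 <= pi eta) /\
  (\sum_(eta | valid eta) pi eta = 1) /\
  (forall eta, valid eta ->
     \sum_(eta' | valid eta') pi eta' * Q x t eta' eta
     = \sum_(eta' | valid eta') pi eta * Q x t eta eta').

Definition expected_count (k n : nat) (m : 'I_k -> nat)
    (pi : config n m -> R) (j : 'I_k) (site : 'I_n) : R :=
  \sum_(eta | valid eta) pi eta * (eta j site : nat)%:R.

(* M_{j+1} = m_{j+1} + ... + m_k  (0-indexed j) and M_{j+2} *)
Definition Mge (k : nat) (m : 'I_k -> nat) (j : 'I_k) : nat :=
  (\sum_(r < k | (j <= r)%N) m r)%N.
Definition Mgt (k : nat) (m : 'I_k -> nat) (j : 'I_k) : nat :=
  (\sum_(r < k | (j < r)%N) m r)%N.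

Definition setx (n : nat) (x : 'I_n -> R) (i0 : 'I_n) (y : R) : 'I_n -> R :=
  fun i => if i == i0 then y else x i.

End MTAZRP.

(* Lumping all species [>= s] into one turns the mTAZRP into a single-species
   zero-range process on the ring, with rate [x_j^-1 [c]_t] out of a site [j]
   holding [c] particles: the factors [t^d] of the individual rates telescope.
   A maximum principle on the (irreducible) lumped dynamics shows that its
   stationary law is proportional to [prod_i x_i^(v_i) / [v_i]_t!], whose total
   mass is [Htilde_<1^(M_s)> / [M_s]_t!]; hence the expected number of lumped
   particles at site 1 is [x_1 d/dx_1 log Htilde_<1^(M_s)>].  Species [j] is
   the difference between the lumps [>= j] and [>= j+1]. *)

From HB Require Import structures.
From mathcomp Require Import all_boot all_order all_algebra.
From mathcomp Require Import all_classical all_reals all_analysis.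
From mathcomp Require Import zify ring.
Set Implicit Arguments. Unset Strict Implicit. Unset Printing Implicit Defensive.
Import Order.TTheory GRing.Theory Num.Theory.
Local Open Scope ring_scope.

Lemma sum_nat_eq1 (I : finType) (j : I) : (\sum_i (i == j) = 1)%N.
Proof. by rewrite (bigD1 j) //= eqxx big1 // => i /negbTE ->. Qed.

Lemma leq_term_sum (I : finType) (f : I -> nat) (i : I) : (f i <= \sum_l f l)%N.
Proof. by rewrite (bigD1 i) //= leq_addr. Qed.

Lemma leq_terms_sum (I : finType) (f : I -> nat) (i j : I) :
  i != j -> (f i + f j <= \sum_l f l)%N.
Proof.
move=> ij; rewrite (bigD1 i) //= (bigD1 j) /=; last by rewrite eq_sym.
by rewrite addnA leq_addr.
Qed.

Lemma sum_nat_andb_eq (I : finType) (b : bool) (j : I) :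
  (\sum_i (b && (i == j)) = b)%N.
Proof. by case: b; [exact: sum_nat_eq1 | rewrite big1]. Qed.

Lemma sum_nat_eq_andb (I : finType) (P : pred I) (j : I) (b : bool) :
  (\sum_(i | P i) ((i == j) && b) = P j && b)%N.
Proof.
case Pj: (P j); last first.
  by rewrite big1 // => i Pi; case: eqP => // eij; rewrite eij Pj in Pi.
by rewrite (bigD1 j) //= eqxx big1 ?addn0 // => i /andP [_ /negbTE ->].
Qed.

Lemma eq_ffun_valP (I : finType) (M : nat) (f g : {ffun I -> 'I_M}) :
  reflect (forall i, (f i : nat) = g i) (f == g).
Proof. by apply: (iffP eqP) => [-> // | fg]; apply/ffunP => i; apply/val_inj/fg. Qed.

Section QNumbers.
Variable R : realType.
Implicit Types (t : R) (a b : nat).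

Lemma qint0 t : qint t 0 = 0.
Proof. by rewrite /qint big_ord0. Qed.

Lemma qint_ge0 t a : 0 <= t -> 0 <= qint t a.
Proof. by move=> ht; apply: sumr_ge0 => i _; apply: exprn_ge0. Qed.

Lemma qint_gt0 t a : 0 <= t -> (0 < a)%N -> 0 < qint t a.
Proof.
move=> ht; case: a => // a _; rewrite /qint big_ord_recl expr0.
by rewrite ltr_pwDl // sumr_ge0 // => i _; apply: exprn_ge0.
Qed.

Lemma qfact_gt0 t a : 0 <= t -> 0 < qfact t a.
Proof. by move=> ht; apply: prodr_gt0 => i _; apply: qint_gt0. Qed.

Lemma qfactS t a : qfact t a.+1 = qfact t a * qint t a.+1.
Proof. by rewrite /qfact big_ord_recr. Qed.

Lemma qintD t a b : qint t (a + b) = qint t a + t ^+ a * qint t b.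
Proof.
rewrite /qint big_split_ord /= mulr_sumr; congr (_ + _).
by apply: eq_bigr => i _; rewrite exprD.
Qed.

Lemma qint_sum_geq t (k : nat) (c : 'I_k -> nat) (s : nat) :
  \sum_(r < k | (s <= r)%N) t ^+ (\sum_(r' < k | (r < r')%N) c r') * qint t (c r)
  = qint t (\sum_(r < k | (s <= r)%N) c r).
Proof.
have [d] := ubnP (k - s); elim: d s => [|d IH] s hs; first by lia.
case: (ltnP s k) => sk; last first.
  by rewrite !big_pred0 ?qint0 // => r; apply/negbTE; rewrite -ltnNge;
    apply: leq_trans (ltn_ord r) sk.
rewrite (bigD1 (Ordinal sk)) //= [in RHS](bigD1 (Ordinal sk)) //=.
have geqS (r : 'I_k) : ((s <= r)%N && (r != Ordinal sk)) = (s < r)%N.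
  by rewrite ltn_neqAle andbC; congr andb; rewrite -val_eqE /= eq_sym.
rewrite (eq_bigl _ _ geqS) [in RHS](eq_bigl _ _ geqS) IH; last by lia.
by rewrite addnC qintD addrC.
Qed.

End QNumbers.

Notation occupation n N := {ffun 'I_n -> 'I_N.+1}.

Section ZeroRangeProcess.
Variables (R : realType) (n N : nat) (x : 'I_n -> R) (t : R).
Implicit Types (v : occupation n N) (j : 'I_n).

Definition is_comp v : bool := (\sum_(i < n) v i == N)%N.

(* The occupation from which a jump [j -> ordS j] leads to [v] (meaningful
   when [v] has a particle at [ordS j]). *)
Definition unjump j v : occupation n N :=
  [ffun i => inord (v i + (i == j) - (i == ordS j))].

Definition zrp_weight v : R :=
  (\prod_(i < n) x i ^+ v i) / \prod_(i < n) qfact t (v i).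

Lemma unjumpE j v i : is_comp v -> (0 < v (ordS j))%N ->
  (unjump j v i : nat) = (v i + (i == j) - (i == ordS j))%N.
Proof.
move=> /eqP sumv vS; rewrite ffunE inordK //.
have vi := ltn_ord (v i).
case: (eqVneq i j) => [-> | ij] /=; last by lia.
have vj := ltn_ord (v j).
case: (eqVneq j (ordS j)) => [jS|jS]; first by lia.
have := leq_terms_sum (fun l => (v l : nat)) jS; rewrite sumv; lia.
Qed.

Lemma is_comp_unjump j v : is_comp v -> (0 < v (ordS j))%N -> is_comp (unjump j v).
Proof.
move=> cv vS; rewrite /is_comp; under eq_bigr => i _ do rewrite unjumpE //.
rewrite sumnB; last by move=> i _; case: (eqVneq i (ordS j)) => [->|] /=; lia.
by rewrite big_split /= !sum_nat_eq1 addnK.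
Qed.

Lemma zrp_weight_gt0 v : (forall i, 0 < x i) -> 0 <= t -> 0 < zrp_weight v.
Proof.
move=> hx ht; apply: divr_gt0; apply: prodr_gt0 => i _; last exact: qfact_gt0.
exact: exprn_gt0.
Qed.

Lemma zrp_weight_unjump j v : (forall i, 0 < x i) -> 0 <= t ->
  is_comp v -> (0 < v (ordS j))%N ->
  zrp_weight (unjump j v) * ((x j)^-1 * qint t (unjump j v j))
  = zrp_weight v * ((x (ordS j))^-1 * qint t (v (ordS j))).
Proof.
move=> hx ht cv vS.
case: (eqVneq j (ordS j)) => [jS|jS].
  have -> : unjump j v = v.
    by apply/ffunP => i; apply: val_inj; rewrite /= unjumpE // -jS; lia.
  by rewrite -jS.
have uj : (unjump j v j : nat) = (v j).+1 by rewrite unjumpE // eqxx (negbTE jS); lia.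
have uS : (unjump j v (ordS j) : nat) = (v (ordS j)).-1.
  by rewrite unjumpE // eqxx eq_sym (negbTE jS); lia.
have uo i : i != j -> i != ordS j -> (unjump j v i : nat) = v i.
  by move=> ij iS; rewrite unjumpE // (negbTE ij) (negbTE iS) addn0 subn0.
have split2 (F : 'I_n -> R) : \prod_(i < n) F i
    = F j * F (ordS j) * \prod_(i < n | (i != j) && (i != ordS j)) F i.
  by rewrite (bigD1 j) //= (bigD1 (ordS j)) 1?eq_sym //= mulrA.
rewrite /zrp_weight !split2 uj uS.
rewrite [\prod_(i | _) x i ^+ unjump j v i](eq_bigr (fun i => x i ^+ v i)); last first.
  by move=> i /andP [ij iS]; rewrite uo.
rewrite [\prod_(i | _) qfact t (unjump j v i)](eq_bigr (fun i => qfact t (v i))); last first.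
  by move=> i /andP [ij iS]; rewrite uo.
move: vS; case: (v (ordS j) : nat) => [//|b] _ /=.
rewrite !exprS !qfactS.
set P1 := \prod_(i | _) x i ^+ v i.
set P2 := \prod_(i | _) qfact t (v i).
have P1_gt0 : 0 < P1 by apply/prodr_gt0 => i _; apply: exprn_gt0.
have P2_gt0 : 0 < P2 by apply/prodr_gt0 => i _; apply: qfact_gt0.
have [xj xS] := (hx j, hx (ordS j)).
have [qj qb] := (qint_gt0 (a := (v j).+1) ht isT, qint_gt0 (a := b.+1) ht isT).
have [fj fb] := (qfact_gt0 (v j) ht, qfact_gt0 b ht).
by field; rewrite !gt_eqF.
Qed.

(* Global balance for the single-species process in which a site [j] holding
   [c] particles emits one at rate [x_j^-1 [c]_t]. *)
Definition zrp_balance (g : occupation n N -> R) :=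
  forall v, is_comp v ->
  \sum_(j < n) (if (0 < v (ordS j))%N
                then (x j)^-1 * qint t (unjump j v j) * g (unjump j v) else 0)
  = g v * \sum_(j < n) (x j)^-1 * qint t (v j).

Lemma zrp_balanceN g : zrp_balance g -> zrp_balance (fun v => - g v).
Proof.
move=> bg v cv; rewrite mulNr -bg // -sumrN; apply: eq_bigr => j _.
by case: ifP => _; rewrite ?oppr0 // mulrN.
Qed.

Section MaximumPrinciple.
Hypotheses (hx : forall i, 0 < x i) (ht : 0 <= t).
Variable g : occupation n N -> R.
Hypothesis bg : zrp_balance g.

Let f v := g v / zrp_weight v.

Lemma zrp_weightK v : f v * zrp_weight v = g v.
Proof. by rewrite divfK // lt0r_neq0 // zrp_weight_gt0. Qed.

(* Divided by the weight, the balance equation says that [f v] is a convex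
   combination of the [f (unjump j v)]; so a maximum propagates backwards
   along jumps. *)
Lemma max_ratio_unjump v j : is_comp v ->
  (forall u, is_comp u -> f u <= f v) -> (0 < v (ordS j))%N ->
  f (unjump j v) = f v.
Proof.
move=> cv Hmax vS.
pose b i := zrp_weight v * ((x (ordS i))^-1 * qint t (v (ordS i))).
have bge0 i : 0 <= b i.
  apply: mulr_ge0; first exact/ltW/zrp_weight_gt0.
  by rewrite mulr_ge0 ?qint_ge0 // invr_ge0 ltW.
have b0 i : ~~ (0 < v (ordS i))%N -> b i = 0.
  by rewrite lt0n negbK /b => /eqP ->; rewrite qint0 !mulr0.
have sum_gaps : \sum_(i < n) (f v - f (unjump i v)) * b i = 0.
  have := bg cv.
  rewrite (eq_bigr (fun i => f (unjump i v) * b i)); last first.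
    move=> i _; case: ifP => vi; last by rewrite b0 ?vi ?mulr0.
    by rewrite -zrp_weightK /b -zrp_weight_unjump //; ring.
  rewrite [X in _ = _ * X](reindex_inj (@ordS_inj n)) /= -zrp_weightK -mulrA mulr_sumr => E.
  under eq_bigr => i _ do rewrite mulrBl.
  by rewrite sumrB E mulr_sumr subrr.
have gap_j : (f v - f (unjump j v)) * b j = 0.
  apply: (psumr_eq0P _ sum_gaps) => // i _.
  have [vi|vi] := posnP (v (ordS i)); first by rewrite b0 ?vi ?mulr0.
  by rewrite mulr_ge0 // subr_ge0 Hmax // is_comp_unjump.
have bj : 0 < b j.
  apply: mulr_gt0; first exact: zrp_weight_gt0.
  by rewrite mulr_gt0 ?qint_gt0 // invr_gt0.
by move/eqP: gap_j; rewrite mulf_eq0 (gt_eqF bj) orbF subr_eq0 => /eqP ->.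
Qed.

End MaximumPrinciple.
End ZeroRangeProcess.

Section Uniqueness.
Variables (R : realType) (n N : nat) (hn : (0 < n)%N) (x : 'I_n -> R) (t : R).
Hypotheses (hx : forall i, 0 < x i) (ht : 0 <= t).
Implicit Types (v : occupation n N) (j : 'I_n).

Let site0 : 'I_n := Ordinal hn.

Definition corner : occupation n N :=
  [ffun i => if i == site0 then ord_max else ord0].

Lemma is_comp_corner : is_comp corner.
Proof.
rewrite /is_comp (bigD1 site0) //= ffunE eqxx big1 ?addn0 // => i /negbTE i0.
by rewrite ffunE i0.
Qed.

Lemma corner_concentrated v : is_comp v ->
  (forall i : 'I_n, (0 < i)%N -> (v i : nat) = 0%N) -> v = corner.
Proof.
move=> /eqP sumv v0; have vi0 i : i != site0 -> (v i : nat) = 0%N.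
  by move=> ne; apply: v0; rewrite lt0n; apply: contra ne => /eqP i0; apply/eqP/val_inj.
apply/ffunP => i; rewrite ffunE; apply: val_inj.
case: (eqVneq i site0) => [->|/vi0 //] /=.
by rewrite -[X in _ = X]sumv (bigD1 site0) //= big1 ?addn0 // => l /vi0.
Qed.

(* Termination measure for moving particles towards site [0]. *)
Definition potential v : nat := (\sum_(i < n) i * v i)%N.

Lemma potential_unjump v (i : 'I_n) : is_comp v -> (0 < i)%N -> (0 < v i)%N ->
  exists j, ordS j = i /\ (potential (unjump j v) < potential v)%N.
Proof.
move=> cv ip vi; have ilt : (i.-1 < n)%N by apply: leq_ltn_trans (leq_pred i) _.
exists (Ordinal ilt); have Sj : ordS (Ordinal ilt) = i.
  by apply: val_inj => /=; rewrite prednK // modn_small.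
split => //; rewrite /potential.
under eq_bigr => l _ do rewrite unjumpE ?Sj // mulnBr mulnDr.
rewrite sumnB; last by move=> l _; case: (eqVneq l i) => [->|] /=; nia.
have sum_eq (j : 'I_n) : (\sum_(l < n) l * (l == j))%N = j.
  by rewrite (bigD1 j) //= eqxx muln1 big1 ?addn0 // => l /negbTE ->; rewrite muln0.
rewrite big_split /= !sum_eq /=.
have /= := leq_term_sum (fun l : 'I_n => (l * v l)%N) i; nia.
Qed.

Lemma unjump_reach_corner (P : occupation n N -> Prop) :
  (forall v j, is_comp v -> (0 < v (ordS j))%N -> P v -> P (unjump j v)) ->
  forall v, is_comp v -> P v -> P corner.
Proof.
move=> HP v; have [p] := ubnP (potential v); elim: p v => // p IH v pv cv Pv.
case: (pickP (fun i : 'I_n => (0 < i)%N && (0 < v i)%N)) => [i /andP [ip vi]|none].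
  have [j [Sj lt]] := potential_unjump cv ip vi.
  have vS : (0 < v (ordS j))%N by rewrite Sj.
  by apply: (IH (unjump j v)); [lia | apply: is_comp_unjump | apply: HP].
rewrite -(corner_concentrated cv) // => i ip.
by move: (none i); rewrite ip /=; case: (v i : nat).
Qed.

Variable g : occupation n N -> R.
Hypothesis bg : zrp_balance x t g.

Let f v := g v / zrp_weight x t v.

Lemma zrp_ratio_le_corner v : is_comp v -> f v <= f corner.
Proof.
have [vM cM Hmax] := arg_maxP f is_comp_corner.
pose Pmax u := is_comp u /\ (forall w, is_comp w -> f w <= f u).
have PvM : Pmax vM by split=> // w /Hmax.
move=> cv; suff [_] : Pmax corner by apply.
apply: (unjump_reach_corner (P := Pmax)) cM PvM.
move=> u j cu uS [_ Hu]; split; first exact: is_comp_unjump.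
by rewrite /f (max_ratio_unjump hx ht bg cu Hu uS).
Qed.

End Uniqueness.

Lemma zrp_balance_ratio (R : realType) (n N : nat) (hn : (0 < n)%N)
    (x : 'I_n -> R) (t : R) (hx : forall i, 0 < x i) (ht : 0 <= t)
    (g : occupation n N -> R) :
  zrp_balance x t g -> forall v, is_comp v ->
  g v / zrp_weight x t v = g (corner N hn) / zrp_weight x t (corner N hn).
Proof.
move=> bg v cv; apply/eqP; rewrite eq_le zrp_ratio_le_corner //=.
by have := zrp_ratio_le_corner hn hx ht (zrp_balanceN bg) cv; rewrite !mulNr lerN2.
Qed.

Section Dynamics.
Variables (R : realType) (k n : nat) (m : 'I_k -> nat) (x : 'I_n -> R) (t : R).
Local Notation cfg := (config n m).
Implicit Types (eta : cfg) (r : 'I_k) (j : 'I_n).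

Definition jump eta r j : cfg :=
  [ffun r' => [ffun i =>
     inord (eta r' i - ((r' == r) && (i == j)) + ((r' == r) && (i == ordS j)))]].

Lemma valid_sum eta r : valid eta -> (\sum_(i < n) eta r i)%N = m r.
Proof. by move=> /forallP /(_ r) /eqP. Qed.

Lemma jumpE eta r j r' i : valid eta -> (0 < eta r j)%N ->
  (jump eta r j r' i : nat)
  = (eta r' i - ((r' == r) && (i == j)) + ((r' == r) && (i == ordS j)))%N.
Proof.
move=> ve ej; rewrite !ffunE inordK //.
move: (ltn_ord (eta r' i)); case: (eqVneq r' r) => [->|] /=; last by lia.
case: (eqVneq i j) => [->|ij] /=; first by case: (j == ordS j) => /=; lia.
case: (eqVneq i (ordS j)) => [iS|] /=; last by lia.
have := leq_terms_sum (fun l => (eta r l : nat)) ij.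
have : (m r <= tot m)%N := leq_term_sum m r.
rewrite /= valid_sum //; lia.
Qed.

Lemma moved_jump eta r j eta' : valid eta ->
  moved eta r j eta' = (0 < eta r j)%N && (eta' == jump eta r j).
Proof.
move=> ve; rewrite /moved; case ej: (0 < eta r j)%N => //=.
apply/forallP/eqP => [H | ->].
  apply/ffunP => r'; apply/ffunP => i; apply: val_inj => /=; rewrite jumpE //.
  exact/eqP/(forallP (H r') i).
by move=> r'; apply/forallP => i; rewrite jumpE.
Qed.

Lemma valid_jump eta r j : valid eta -> (0 < eta r j)%N -> valid (jump eta r j).
Proof.
move=> ve ej; apply/forallP => r'; apply/eqP.
under eq_bigr => i _ do rewrite jumpE //.
rewrite big_split /= sumnB; last first.
  by move=> i _; case: (eqVneq r' r) => [->|] //=; case: (eqVneq i j) => [->|].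
rewrite !sum_nat_andb_eq valid_sum //.
case: (eqVneq r' r) => [->|] /=; last by rewrite subn0 addn0.
by have := leq_term_sum (fun l => (eta r l : nat)) j; rewrite /= valid_sum //; lia.
Qed.

Lemma jump_rate_empty eta r j : ~~ (0 < eta r j)%N -> jump_rate x t eta r j = 0.
Proof. by rewrite -eqn0Ngt /jump_rate => /eqP ->; rewrite qint0 mulr0. Qed.

Definition exit_rate eta : R := \sum_(r < k) \sum_(j < n) jump_rate x t eta r j.

Lemma sum_Q_out eta : valid eta -> \sum_(eta' | valid eta') Q x t eta eta' = exit_rate eta.
Proof.
move=> ve; rewrite /Q exchange_big; apply: eq_bigr => r _.
rewrite exchange_big; apply: eq_bigr => j _.
under eq_bigr => e _ do rewrite moved_jump //.
case ej: (0 < eta r j)%N => /=; last first.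
  by rewrite big1 // jump_rate_empty ?ej.
rewrite (bigD1 (jump eta r j)) ?valid_jump //= eqxx big1 ?addr0 //.
by move=> e /andP [_ /negbTE ->].
Qed.

Lemma sum_mul_Q eta (F : cfg -> R) : valid eta ->
  \sum_eta' F eta' * Q x t eta eta'
  = \sum_(r < k) \sum_(j < n) F (jump eta r j) * jump_rate x t eta r j.
Proof.
move=> ve; rewrite /Q; under eq_bigr do rewrite mulr_sumr; rewrite exchange_big.
apply: eq_bigr => r _; under eq_bigr do rewrite mulr_sumr; rewrite exchange_big.
apply: eq_bigr => j _; under eq_bigr do rewrite moved_jump //.
case ej: (0 < eta r j)%N => /=; last first.
  by rewrite jump_rate_empty ?ej ?mulr0 // big1 // => e _; rewrite mulr0.
by rewrite (bigD1 (jump eta r j)) //= eqxx big1 ?addr0 // => e /negbTE ->; rewrite mulr0.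
Qed.

Definition lump_count (s : nat) eta (i : 'I_n) : nat :=
  (\sum_(r < k | (s <= r)%N) eta r i)%N.

Definition lump_total (s : nat) : nat := (\sum_(r < k | (s <= r)%N) m r)%N.

Definition lump (s : nat) eta : occupation n (lump_total s) :=
  [ffun i => inord (lump_count s eta i)].

Variable s : nat.

Lemma sum_lump_count eta : valid eta -> (\sum_(i < n) lump_count s eta i)%N = lump_total s.
Proof.
by move=> ve; rewrite exchange_big; apply: eq_bigr => r _; apply: valid_sum.
Qed.

Lemma lumpE eta i : valid eta -> (lump s eta i : nat) = lump_count s eta i.
Proof.
move=> ve; rewrite ffunE inordK // ltnS -(sum_lump_count ve).
exact: (leq_term_sum (lump_count s eta)).
Qed.

Lemma is_comp_lump eta : valid eta -> is_comp (lump s eta).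
Proof.
move=> ve; rewrite /is_comp; under eq_bigr => i _ do rewrite lumpE //.
by rewrite sum_lump_count.
Qed.

Lemma sum_jump_rate_geq eta j :
  \sum_(r < k | (s <= r)%N) jump_rate x t eta r j = (x j)^-1 * qint t (lump_count s eta j).
Proof.
rewrite /jump_rate -qint_sum_geq mulr_sumr; apply: eq_bigr => r _.
by rewrite mulrA.
Qed.

Definition exit_rate_lt eta : R :=
  \sum_(r < k | (r < s)%N) \sum_(j < n) jump_rate x t eta r j.

Lemma exit_rate_split eta : exit_rate eta
  = exit_rate_lt eta + \sum_(j < n) (x j)^-1 * qint t (lump_count s eta j).
Proof.
rewrite /exit_rate (bigID (fun r : 'I_k => (r < s)%N)) /=; congr (_ + _).
rewrite exchange_big; apply: eq_bigr => j _; rewrite -sum_jump_rate_geq.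
by apply: eq_bigl => r; rewrite -leqNgt.
Qed.

Lemma lump_count_jump eta r j i : valid eta -> (0 < eta r j)%N ->
  lump_count s (jump eta r j) i
  = (lump_count s eta i - ((s <= r) && (i == j)) + ((s <= r) && (i == ordS j)))%N.
Proof.
move=> ve ej; rewrite /lump_count; under eq_bigr => r' _ do rewrite jumpE //.
rewrite big_split /= sumnB; last first.
  by move=> r' _; case: (eqVneq r' r) => [->|] //=; case: (eqVneq i j) => [->|].
by rewrite !sum_nat_eq_andb.
Qed.

Lemma lump_jump_lt eta r j : valid eta -> (0 < eta r j)%N -> (r < s)%N ->
  lump s (jump eta r j) = lump s eta.
Proof.
move=> ve ej rs; apply/ffunP => i; apply: val_inj.
rewrite /= !lumpE ?valid_jump // lump_count_jump // leqNgt rs /=; lia.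
Qed.

Lemma lump_jump_geq eta r j v : valid eta -> (0 < eta r j)%N -> (s <= r)%N ->
  is_comp v ->
  (lump s (jump eta r j) == v) = (lump s eta == unjump j v) && (0 < v (ordS j))%N.
Proof.
move=> ve ej sr cv.
have ejl : (eta r j <= lump_count s eta j)%N by rewrite /lump_count (bigD1 r) //= leq_addr.
have lumpJ i : (lump s (jump eta r j) i : nat)
    = (lump_count s eta i - (i == j) + (i == ordS j))%N.
  by rewrite lumpE ?valid_jump // lump_count_jump // sr.
case vS: (0 < v (ordS j))%N; last first.
  rewrite andbF; apply/negP => /eq_ffun_valP /(_ (ordS j)).
  by rewrite lumpJ eqxx /=; lia.
rewrite andbT; apply/eq_ffun_valP/eq_ffun_valP => H i; move: (H i);
  rewrite lumpJ unjumpE // lumpE //;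
  by case: (eqVneq i j) => [->|_] /=;
    [case: (j == ordS j) | case: (eqVneq i (ordS j)) => [->|_]]; rewrite /=; lia.
Qed.

End Dynamics.

Section Lumping.
Variables (R : realType) (k n : nat) (m : 'I_k -> nat) (x : 'I_n -> R) (t : R).
Variable pi : config n m -> R.
Hypothesis hpi : stationary x t pi.
Variable s : nat.
Local Notation cfg := (config n m).
Local Notation N := (lump_total m s).

Lemma pi_invalid (eta : cfg) : ~~ valid eta -> pi eta = 0.
Proof. by case: hpi => H _; apply: H. Qed.

Lemma sum_pi_valid (F : cfg -> R) :
  \sum_(eta | valid eta) pi eta * F eta = \sum_eta pi eta * F eta.
Proof.
rewrite [RHS](bigID (@valid k n m)) /= [X in _ = _ + X]big1 ?addr0 //.
by move=> eta /pi_invalid ->; rewrite mul0r.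
Qed.

Lemma eq_sum_pi (F G : cfg -> R) : (forall eta, valid eta -> F eta = G eta) ->
  \sum_eta pi eta * F eta = \sum_eta pi eta * G eta.
Proof.
move=> FG; apply: eq_bigr => eta _.
by case: (boolP (valid eta)) => [/FG -> // | /pi_invalid ->]; rewrite !mul0r.
Qed.

Lemma stationary_inflow (eta : cfg) :
  \sum_eta' pi eta' * Q x t eta' eta = pi eta * exit_rate x t eta.
Proof.
case: (boolP (valid eta)) => ve.
  have [_ [_ [_ bal]]] := hpi.
  by rewrite -sum_Q_out // mulr_sumr -bal // sum_pi_valid.
rewrite pi_invalid // mul0r.
transitivity (\sum_(eta' : cfg) pi eta' * 0); last by rewrite big1 // => e _; rewrite mulr0.
apply: eq_sum_pi => e' ve'; rewrite /Q big1 // => r _; rewrite big1 // => j _.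
rewrite moved_jump //; case: ifP => // /andP [ej /eqP E].
by move: ve; rewrite E valid_jump.
Qed.

Definition lump_law (v : occupation n N) : R := \sum_eta pi eta * (lump s eta == v)%:R.

Lemma sum_lump_Q (eta : cfg) (v : occupation n N) : valid eta -> is_comp v ->
  \sum_eta' (lump s eta' == v)%:R * Q x t eta eta'
  = (lump s eta == v)%:R * exit_rate_lt x t s eta
  + \sum_(j < n) (if (0 < v (ordS j))%N then
      (lump s eta == unjump j v)%:R * ((x j)^-1 * qint t (unjump j v j)) else 0).
Proof.
move=> ve cv; rewrite sum_mul_Q // (bigID (fun r : 'I_k => (r < s)%N)) /=.
congr (_ + _).
  rewrite /exit_rate_lt mulr_sumr; apply: eq_bigr => r rs; rewrite mulr_sumr.
  apply: eq_bigr => j _; case: (posnP (eta r j)) => [ej|ej].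
    by rewrite jump_rate_empty ?ej // !mulr0.
  by rewrite lump_jump_lt.
rewrite exchange_big; apply: eq_bigr => j _.
under eq_bigl do rewrite -leqNgt.
under eq_bigr => r sr.
  have -> : (lump s (jump eta r j) == v)%:R * jump_rate x t eta r j
      = ((lump s eta == unjump j v) && (0 < v (ordS j))%N)%:R * jump_rate x t eta r j.
    case: (posnP (eta r j)) => [ej|ej]; first by rewrite jump_rate_empty ?ej // !mulr0.
    by rewrite lump_jump_geq.
  over.
rewrite -mulr_sumr sum_jump_rate_geq.
case: (0 < v (ordS j))%N; last by rewrite andbF mul0r.
rewrite andbT; case: eqP => [<-|_]; last by rewrite !mul0r.
by rewrite lumpE.
Qed.

(* Jumps of species [< s] do not move the lumped occupation: their flux appears
   on both sides of the summed balance equations and cancels. *)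
Let slow_flux (v : occupation n N) : R :=
  \sum_eta pi eta * ((lump s eta == v)%:R * exit_rate_lt x t s eta).

Lemma lump_outflow (v : occupation n N) :
  \sum_eta (lump s eta == v)%:R * (pi eta * exit_rate x t eta)
  = slow_flux v + lump_law v * \sum_(j < n) (x j)^-1 * qint t (v j).
Proof.
under eq_bigr do rewrite mulrCA.
rewrite (@eq_sum_pi _ (fun e => (lump s e == v)%:R * exit_rate_lt x t s e
  + (lump s e == v)%:R * \sum_(j < n) (x j)^-1 * qint t (v j))).
  under eq_bigr do rewrite mulrDr.
  rewrite big_split /= /lump_law mulr_suml; congr (_ + _).
  by apply: eq_bigr => e _; rewrite mulrA.
move=> e ve; rewrite (exit_rate_split _ _ s) mulrDr.
case: eqP => [<-|_]; last by rewrite !mul0r.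
by congr (_ + _ * _); apply: eq_bigr => j _; rewrite lumpE.
Qed.

Lemma lump_inflow (v : occupation n N) : is_comp v ->
  \sum_eta (lump s eta == v)%:R * \sum_eta' pi eta' * Q x t eta' eta
  = slow_flux v + \sum_(j < n) (if (0 < v (ordS j))%N
      then (x j)^-1 * qint t (unjump j v j) * lump_law (unjump j v) else 0).
Proof.
move=> cv; transitivity (\sum_eta' pi eta' * \sum_eta (lump s eta == v)%:R * Q x t eta' eta).
  under eq_bigr do rewrite mulr_sumr; rewrite exchange_big /=.
  by apply: eq_bigr => e' _; rewrite mulr_sumr; apply: eq_bigr => e _; rewrite mulrCA.
rewrite (@eq_sum_pi _ (fun e => (lump s e == v)%:R * exit_rate_lt x t s e
  + \sum_(j < n) (if (0 < v (ordS j))%N then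
      (lump s e == unjump j v)%:R * ((x j)^-1 * qint t (unjump j v j)) else 0))); last first.
  by move=> e ve; rewrite sum_lump_Q.
under eq_bigr do rewrite mulrDr; rewrite big_split /=; congr (_ + _).
under eq_bigr do rewrite mulr_sumr; rewrite exchange_big /=.
apply: eq_bigr => j _; case: ifP => _; last by rewrite big1 // => e _; rewrite mulr0.
by rewrite /lump_law [RHS]mulr_sumr; apply: eq_bigr => e _; ring.
Qed.

Lemma lump_law_balance : zrp_balance x t lump_law.
Proof.
move=> v cv; apply: (addrI (slow_flux v)); rewrite -lump_inflow // -lump_outflow.
by apply: eq_bigr => e _; rewrite stationary_inflow.
Qed.

End Lumping.

Arguments lump_law {R k n m} pi s v.

Lemma is_derive_big (R : realType) (I : finType) (P : pred I) (F : I -> R -> R)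
    (dF : I -> R) (y : R) :
  (forall i, is_derive y 1 (F i) (dF i)) ->
  is_derive y 1 (fun z => \sum_(i | P i) F i z) (\sum_(i | P i) dF i).
Proof.
move=> dFi; have -> : (fun z => \sum_(i | P i) F i z) = \sum_(i | P i) F i.
  by apply/funext => z; rewrite fct_sumE.
elim/big_rec2 : _ => [|i d f _ IH]; first exact: is_derive_cst.
exact: is_deriveD.
Qed.

Lemma is_derive_scaled_monomial (R : realType) (c : R) (p : nat) (y : R) :
  is_derive y 1 (fun z => c * z ^+ p) (c * (p%:R * y ^+ p.-1)).
Proof.
have dX : is_derive y 1 (@GRing.exp R ^~ p) (p%:R * y ^+ p.-1).
  apply: DeriveDef; first exact: exprn_derivable.
  by rewrite exp_derive [LHS]mulr1.
have -> : (fun z => c * z ^+ p) = c \*: (@GRing.exp R ^~ p) by apply/funext.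
exact: is_derive_eq (is_deriveZ c dX) _.
Qed.

Section PartitionFunction.
Variables (R : realType) (n N : nat) (x : 'I_n -> R) (t : R).

Definition zrp_partition (z : 'I_n -> R) : R :=
  \sum_(v : occupation n N | is_comp v) zrp_weight z t v.

Definition zrp_moment (i0 : 'I_n) : R :=
  \sum_(v : occupation n N | is_comp v) (v i0)%:R * zrp_weight x t v.

Lemma Htilde_partition (z : 'I_n -> R) : Htilde N z t = qfact t N * zrp_partition z.
Proof. by rewrite /Htilde mulr_sumr; apply: eq_bigr => v _; rewrite /zrp_weight; ring. Qed.

Lemma zrp_partition_gt0 (hn : (0 < n)%N) (z : 'I_n -> R) : (forall i, 0 < z i) -> 0 <= t ->
  0 < zrp_partition z.
Proof.
move=> hz ht; rewrite /zrp_partition (bigD1 (corner N hn)) ?is_comp_corner //=.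
by rewrite ltr_pwDl ?zrp_weight_gt0 // sumr_ge0 // => v _; rewrite ltW ?zrp_weight_gt0.
Qed.

Lemma setx_id (i0 : 'I_n) : setx x i0 (x i0) = x.
Proof. by apply/funext => i; rewrite /setx; case: eqVneq => // ->. Qed.

(* The partition function is a polynomial in the coordinate [x i0], and
   [y d/dy] multiplies the coefficient of [y ^+ p] by [p]. *)
Lemma is_derive_zrp_partition (i0 : 'I_n) : 0 < x i0 ->
  is_derive (x i0) 1 (fun y => zrp_partition (setx x i0 y)) (zrp_moment i0 / x i0).
Proof.
move=> hx0.
pose c (v : occupation n N) :=
  (\prod_(i < n | i != i0) x i ^+ v i) / \prod_(i < n) qfact t (v i).
have weightE (v : occupation n N) y : zrp_weight (setx x i0 y) t v = c v * y ^+ v i0.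
  rewrite /zrp_weight /c (bigD1 i0) //= /setx eqxx.
  by rewrite (eq_bigr (fun i => x i ^+ v i)) => [|i /negbTE ->]; first ring.
have -> : (fun y => zrp_partition (setx x i0 y))
    = (fun y => \sum_(v | is_comp v) c v * y ^+ v i0).
  by apply/funext => y; apply: eq_bigr => v _; rewrite weightE.
apply: is_derive_eq; first by apply: is_derive_big => v; apply: is_derive_scaled_monomial.
have weight_x v : zrp_weight x t v = c v * x i0 ^+ v i0 by rewrite -weightE setx_id.
rewrite /zrp_moment mulr_suml; apply: eq_bigr => v _; rewrite weight_x.
case: (v i0 : nat) => [|p] /=; first by rewrite !mul0r mulr0.
by rewrite exprS; field; rewrite gt_eqF.
Qed.

End PartitionFunction.

Lemma derive1_ln_div (R : realType) (f g : R -> R) (y df dg : R) :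
  is_derive y 1 f df -> is_derive y 1 g dg -> 0 < f y -> 0 < g y ->
  derive1 (fun z => ln (f z / g z)) y = df / f y - dg / g y.
Proof.
move=> df_y dg_y fy gy.
have dV := is_deriveV (lt0r_neq0 gy) dg_y.
have dM := is_deriveM df_y dV.
have dln := @is_derive1_comp _ (@ln R) (f * (fun z => (g z)^-1)) y _ _
  (is_derive1_ln (divr_gt0 fy gy)) dM.
rewrite (_ : (fun z => ln (f z / g z)) = @ln R \o (f * (fun z => (g z)^-1))) //.
rewrite derive1E; have [_ ->] := dln; rewrite /GRing.scale /=.
by field; rewrite !gt_eqF.
Qed.

Lemma xderive_ln_Htilde_div (R : realType) (n : nat) (hn : (0 < n)%N)
    (x : 'I_n -> R) (t : R) (hx : forall i, 0 < x i) (ht : 0 <= t) (i0 : 'I_n) (a b : nat) :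
  x i0 * derive1 (fun y => ln (Htilde a (setx x i0 y) t / Htilde b (setx x i0 y) t)) (x i0)
  = zrp_moment a x t i0 / zrp_partition a t x - zrp_moment b x t i0 / zrp_partition b t x.
Proof.
have dH N : is_derive (x i0) 1 (fun y => Htilde N (setx x i0 y) t)
    (qfact t N * (zrp_moment N x t i0 / x i0)).
  under eq_fun do rewrite Htilde_partition.
  exact/is_deriveZ/is_derive_zrp_partition.
have HE N : Htilde N (setx x i0 (x i0)) t = qfact t N * zrp_partition N t x.
  by rewrite setx_id Htilde_partition.
have H_gt0 N : 0 < Htilde N (setx x i0 (x i0)) t.
  by rewrite HE mulr_gt0 ?qfact_gt0 ?zrp_partition_gt0.
rewrite (derive1_ln_div (dH a) (dH b) (H_gt0 a) (H_gt0 b)) !HE.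
have [qa qb] := (qfact_gt0 a ht, qfact_gt0 b ht).
have [Za Zb] := (zrp_partition_gt0 a hn hx ht, zrp_partition_gt0 b hn hx ht).
have x0 := hx i0.
by field; rewrite !gt_eqF.
Qed.

Section Expectation.
Variables (R : realType) (k n : nat) (hn : (0 < n)%N) (m : 'I_k -> nat).
Variables (x : 'I_n -> R) (t : R) (pi : config n m -> R).
Hypotheses (hx : forall i, 0 < x i) (ht : 0 <= t) (hpi : stationary x t pi).
Variable s : nat.
Local Notation N := (lump_total m s).

Lemma sum_lump_law (F : occupation n N -> R) :
  \sum_(v | is_comp v) F v * lump_law pi s v
  = \sum_(eta | valid eta) pi eta * F (lump s eta).
Proof.
rewrite (sum_pi_valid hpi); under eq_bigr do rewrite mulr_sumr.
rewrite exchange_big /=.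
under eq_bigr do (under eq_bigr do rewrite mulrCA; rewrite -mulr_sumr).
apply: (eq_sum_pi hpi) => e ve.
rewrite (bigD1 (lump s e)) ?is_comp_lump //= eqxx mulr1 big1 ?addr0 //.
by move=> v /andP [_ /negbTE]; rewrite eq_sym => ->; rewrite !mulr0.
Qed.

Lemma lump_law_zrp_weight v : is_comp v ->
  lump_law pi s v = zrp_weight x t v / zrp_partition N t x.
Proof.
have bal := lump_law_balance hpi (s := s).
pose c := lump_law pi s (corner N hn) / zrp_weight x t (corner N hn).
have lawE u : is_comp u -> lump_law pi s u = c * zrp_weight x t u.
  move=> cu; rewrite /c -(zrp_balance_ratio hn hx ht bal cu) divfK //.
  by rewrite gt_eqF ?zrp_weight_gt0.
have sum1 : c * zrp_partition N t x = 1.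
  have [_ [_ [pi1 _]]] := hpi.
  transitivity (\sum_(eta | valid eta) pi eta * 1).
    rewrite -(sum_lump_law (fun=> 1)) /zrp_partition mulr_sumr.
    by apply: eq_bigr => u cu; rewrite lawE // mul1r.
  by under eq_bigr do rewrite mulr1.
have Z_neq0 : zrp_partition N t x != 0 by rewrite gt_eqF ?zrp_partition_gt0.
have cE : c = (zrp_partition N t x)^-1 by apply: (mulIf Z_neq0); rewrite sum1 mulVf.
by move=> cv; rewrite lawE // cE mulrC.
Qed.

Lemma expected_lump_count (i0 : 'I_n) :
  \sum_(eta | valid eta) pi eta * (lump_count s eta i0)%:R
  = zrp_moment N x t i0 / zrp_partition N t x.
Proof.
rewrite (eq_bigr (fun e => pi e * (lump s e i0)%:R)); last by move=> e ve; rewrite lumpE.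
rewrite -(sum_lump_law (fun v => (v i0)%:R)) /zrp_moment mulr_suml.
by apply: eq_bigr => v cv; rewrite lump_law_zrp_weight // mulrA.
Qed.

End Expectation.

Lemma lump_count_rec (k n : nat) (m : 'I_k -> nat) (eta : config n m) (j : 'I_k) (i : 'I_n) :
  lump_count j eta i = (eta j i + lump_count j.+1 eta i)%N.
Proof.
rewrite /lump_count (bigD1 j) //=; congr addn; apply: eq_bigl => r.
by rewrite ltn_neqAle andbC eq_sym.
Qed.

Theorem theorem7 (R : realType) (k : nat) (m : 'I_k -> nat)
  (hm : forall r, (0 < m r)%N) (n : nat) (hn : (0 < n)%N)
  (x : 'I_n -> R) (hx : forall i, 0 < x i) (t : R) (ht : 0 < t)
  (pi : config n m -> R) (hpi : stationary x t pi) (j : 'I_k) :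
  expected_count pi j (Ordinal hn) =
  x (Ordinal hn) *
    derive1 (fun y : R =>
      ln (Htilde (Mge m j) (setx x (Ordinal hn) y) t /
          Htilde (Mgt m j) (setx x (Ordinal hn) y) t)) (x (Ordinal hn)).
Proof.
have ht0 := ltW ht.
rewrite (xderive_ln_Htilde_div hn hx ht0) /Mge /Mgt.
rewrite -!(expected_lump_count hn hx ht0 hpi) -sumrB /expected_count.
by apply: eq_bigr => eta _; rewrite -mulrBr lump_count_rec natrD addrK.
Qed.
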